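(* Let $\mathbb{B}$ be a complete Boolean algebra and $V$ a semi ${\tt D}\mathbb{B}$-valuation. For $T=\lambda\vec x.G(x_1,\dots,x_n)\in Tm_1^{(n)}$ define $V(T):Tm_0^n\to{\tt D}\mathbb{B}$ by $V(T)(t_1,\dots,t_n):=V(G(t_1,\dots,t_n))$. Let $\mathcal{M}=(D_0,D_1)$ be the ${\tt D}\mathbb{B}$-valued model with $D_0=Tm_0$ and $D_1^{(n)}=\{V(T):T\in Tm_1^{(n)}\}$. Then: (1) for every formula $F(X_1,\dots,X_k)$ (free first-order variables being elements of $Tm_0=D_0$), all abstracts $T_i$ of the arity of $X_i$, and $\alpha_i=V(T_i)$, we have $V(F(T_1,\dots,T_k))\unlhd\mathcal{M}(F(\bar\alpha_1,\dots,\bar\alpha_k))$; and (2) $\mathcal{M}\models 3CA$.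
   Context: Language/abstracts: second-order language without relation or function symbols; $Tm_0$ = first-order terms; $Tm_1^{(n)}$ = $n$-ary abstracts $\lambda\vec x.G$; $F(T)$ = substitution of abstract $T$ for $X$. For a cBa $\mathbb{B}$: ${\tt D}\mathbb{B}=\{(a,b)\in\mathbb{B}^2:a\le b\}$, ${\tt a}=(\Box{\tt a},\Diamond{\tt a})$; ${\tt a}\unlhd{\tt b}$ iff $\Box{\tt a}\le\Box{\tt b}$ and $\Diamond{\tt a}\ge\Diamond{\tt b}$; $-{\tt a}=(-\Diamond{\tt a},-\Box{\tt a})$; $\sup_<,\inf_<$ componentwise. For $\alpha,\beta:D_0^n\to{\tt D}\mathbb{B}$, $\alpha\unlhd\beta$ means $\alpha(\vec t)\unlhd\beta(\vec t)$ for all $\vec t\in D_0^n$. A semi ${\tt D}\mathbb{B}$-valuation is a map $V$ from formulas to ${\tt D}\mathbb{B}$ with $V(\lnot F)\unlhd-V(F)$, $V(F_0\lor F_1)\unlhd\sup_<\{V(F_0),V(F_1)\}$, $V(F_0\land F_1)\unlhd\inf_<\{V(F_0),V(F_1)\}$, $V(\exists xF(x))\unlhd\sup_<\{V(F(t)):t\in Tm_0\}$, $V(\forall xF(x))\unlhd\inf_<\{V(F(t)):t\in Tm_0\}$, $V(\exists X^nF(X))\unlhd\sup_<\{V(F(T)):T\in Tm_1^{(n)}\}$, $V(\forall X^nF(X))\unlhd\inf_<\{V(F(T)):T\in Tm_1^{(n)}\}$. A ${\tt D}\mathbb{B}$-valued model is $\mathcal{M}=(D_0,D_1)$ with $D_0\ne\emptyset$,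 $D_1=\bigcup_{n\ge1}D_1^{(n)}$, each $D_1^{(n)}$ a nonempty set of functions $\alpha:D_0^n\to{\tt D}\mathbb{B}$; elements of $D_0$ are individual constants, each $\alpha\in D_1^{(n)}$ gives a relation constant $\bar\alpha$, and $\mathcal{M}(A)\in{\tt D}\mathbb{B}$ is defined by $\mathcal{M}(\bar\alpha(t_1,\dots,t_n))=\alpha(t_1,\dots,t_n)$, $\mathcal{M}(\lnot F)=-\mathcal{M}(F)$, $\mathcal{M}(F_0\lor F_1)=\sup_<$, $\mathcal{M}(F_0\land F_1)=\inf_<$, $\mathcal{M}(\exists xF)=\sup_<\{\mathcal{M}(F(t)):t\in D_0\}$, $\mathcal{M}(\forall xF)=\inf_<\{\cdots\}$, $\mathcal{M}(\exists X^nF)=\sup_<\{\mathcal{M}(F(\bar\alpha)):\alpha\in D_1^{(n)}\}$, $\mathcal{M}(\forall X^nF)=\inf_<\{\cdots\}$, and $\mathcal{M}(\lambda\vec x.G)(t_1,\dots,t_n)=\mathcal{M}(G(t_1,\dots,t_n))$. $\mathcal{M}\models 3CA$ means: for every formula $G(x_1,\dots,x_n,X^k)$ and every $\beta\in D_1^{(k)}$ there is $\alpha\in D_1^{(n)}$ with $\alpha\unlhd\mathcal{M}(\lambda\vec x.G(x_1,\dots,x_n,\bar\beta))$. *)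

From HB Require Import structures.
From mathcomp Require Import all_boot all_order.
Set Implicit Arguments. Unset Strict Implicit. Unset Printing Implicit Defensive.
Import Order.Theory.
Local Open Scope order_scope.

Section CBA.
Context {disp : Order.disp_t} (B : ctbDistrLatticeType disp).

Definition is_sup (S : B -> Prop) (s : B) : Prop :=
  (forall x, S x -> x <= s) /\ (forall u, (forall x, S x -> x <= u) -> s <= u).

Record completeness := Completeness {
  csup : (B -> Prop) -> B;
  csupP : forall S, is_sup S (csup S) }.

Variable cB : completeness.

Definition cinf (S : B -> Prop) : B := csup cB (fun x => forall y, S y -> x <= y).

Lemma cinf_lb S y : S y -> cinf S <= y.
Proof. by move=> Sy; apply: (proj2 (csupP cB _)) => x Hx; apply: Hx. Qed.

Lemma cinf_glb S u : (forall y, S y -> u <= y) -> u <= cinf S.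
Proof. by move=> H; apply: (proj1 (csupP cB _)). Qed.

Definition DB := {p : (B * B)%type | p.1 <= p.2}.
Definition box (a : DB) : B := (sval a).1.
Definition dia (a : DB) : B := (sval a).2.
Lemma box_le_dia (a : DB) : box a <= dia a.
Proof. exact: (svalP a). Qed.

Definition trile (a b : DB) : Prop := box a <= box b /\ dia b <= dia a.

Lemma negDB_ok (a : DB) : ~` dia a <= ~` box a.
Proof. by rewrite leC box_le_dia. Qed.

Definition negDB (a : DB) : DB :=
  exist (fun p : (B * B)%type => p.1 <= p.2) (~` dia a, ~` box a) (negDB_ok a).

Definition boxes (S : DB -> Prop) : B -> Prop := fun x => exists a, S a /\ box a = x.
Definition dias (S : DB -> Prop) : B -> Prop := fun x => exists a, S a /\ dia a = x.

Lemma supDB_ok (S : DB -> Prop) : csup cB (boxes S) <= csup cB (dias S).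
Proof.
apply: (proj2 (csupP cB _)) => x [a [Sa <-]].
apply: le_trans (box_le_dia a) _; apply: (proj1 (csupP cB _)); by exists a.
Qed.

Lemma infDB_ok (S : DB -> Prop) : cinf (boxes S) <= cinf (dias S).
Proof.
apply: cinf_glb => y [a [Sa <-]].
apply: le_trans (box_le_dia a); apply: cinf_lb; by exists a.
Qed.

Definition supDB (S : DB -> Prop) : DB :=
  exist (fun p : (B * B)%type => p.1 <= p.2) (csup cB (boxes S), csup cB (dias S)) (supDB_ok S).
Definition infDB (S : DB -> Prop) : DB :=
  exist (fun p : (B * B)%type => p.1 <= p.2) (cinf (boxes S), cinf (dias S)) (infDB_ok S).

Definition pair2 (a b : DB) : DB -> Prop := fun c => c = a \/ c = b.

Definition botDB : DB :=
  exist (fun p : (B * B)%type => p.1 <= p.2) (\bot, \top) (le0x \top).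

End CBA.

(* Syntax (locally nameless).                                           *)
(*  - first-order bound variables: de Bruijn indices IB i;              *)
(*    free variables / individual constants: IC c  (c : C)              *)
(*  - second-order bound variables of arity n: PB i, a de Bruijn index  *)
(*    counting only the enclosing second-order binders of arity n;      *)
(*    free second-order variables / relation constants: PC k (k : K n)  *)
Inductive iterm (C : Type) : Type := IB of nat | IC of C.
Arguments IB {C}. Arguments IC {C}.

Inductive patom (K : nat -> Type) (n : nat) : Type := PB of nat | PC of K n.
Arguments PB {K n}. Arguments PC {K n}.

Inductive fm (C : Type) (K : nat -> Type) : Type :=
| FAtom (n : nat) (p : patom K n) (ts : n.-tuple (iterm C))
| FNot (F : fm C K)
| FOr (F0 F1 : fm C K)
| FAnd (F0 F1 : fm C K)
| FEx1 (F : fm C K)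
| FAll1 (F : fm C K)
| FEx2 (n : nat) (F : fm C K)
| FAll2 (n : nat) (F : fm C K).
Arguments FAtom {C K n}. Arguments FNot {C K}. Arguments FOr {C K}.
Arguments FAnd {C K}. Arguments FEx1 {C K}. Arguments FAll1 {C K}.
Arguments FEx2 {C K}. Arguments FAll2 {C K}.

Section Syntax.
Variables (C : Type) (K : nat -> Type).

Definition iterm_lift (t : iterm C) : iterm C :=
  match t with IB i => IB i.+1 | IC c => IC c end.
Definition up (s : nat -> iterm C) : nat -> iterm C :=
  fun i => match i with 0 => IB 0 | j.+1 => iterm_lift (s j) end.
Definition iterm_subst (s : nat -> iterm C) (t : iterm C) : iterm C :=
  match t with IB i => s i | IC c => IC c end.

Fixpoint fsubst (s : nat -> iterm C) (F : fm C K) : fm C K :=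
  match F with
  | FAtom n p ts => FAtom p (map_tuple (iterm_subst s) ts)
  | FNot F => FNot (fsubst s F)
  | FOr F0 F1 => FOr (fsubst s F0) (fsubst s F1)
  | FAnd F0 F1 => FAnd (fsubst s F0) (fsubst s F1)
  | FEx1 F => FEx1 (fsubst (up s) F)
  | FAll1 F => FAll1 (fsubst (up s) F)
  | FEx2 n F => FEx2 n (fsubst s F)
  | FAll2 n F => FAll2 n (fsubst s F)
  end.

Definition fopen (t : C) (F : fm C K) : fm C K :=
  fsubst (fun i => match i with 0 => IC t | j.+1 => IB j end) F.

(* An n-ary abstract  \x1..xn.G  is represented by its body G, in which
   x_(i+1) is the dangling index i.  inst G ts = G(t_1,...,t_n). *)
Definition inst (G : fm C K) (ts : seq (iterm C)) : fm C K :=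
  fsubst (fun i => nth (IB 0) ts i) G.

(* F(T) for the body F of a second-order quantifier of arity m
   (k = number of enclosing arity-m binders passed so far) *)
Fixpoint sopen (m k : nat) (T : fm C K) (F : fm C K) : fm C K :=
  match F with
  | FAtom n p ts =>
      match p with
      | PB i => if n == m then
                  (if i == k then inst T ts
                   else if k < i then FAtom (@PB K n i.-1) ts else FAtom (@PB K n i) ts)
                else FAtom p ts
      | PC _ => FAtom p ts
      end
  | FNot F => FNot (sopen m k T F)
  | FOr F0 F1 => FOr (sopen m k T F0) (sopen m k T F1)
  | FAnd F0 F1 => FAnd (sopen m k T F0) (sopen m k T F1)
  | FEx1 F => FEx1 (sopen m k T F)
  | FAll1 F => FAll1 (sopen m k T F)
  | FEx2 n F => FEx2 n (sopen m (if n == m then k.+1 else k) T F)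
  | FAll2 n F => FAll2 n (sopen m (if n == m then k.+1 else k) T F)
  end.

Fixpoint ssubst (th : forall n, K n -> fm C K) (F : fm C K) : fm C K :=
  match F with
  | FAtom n p ts =>
      match p with PC j => inst (th n j) ts | PB _ => FAtom p ts end
  | FNot F => FNot (ssubst th F)
  | FOr F0 F1 => FOr (ssubst th F0) (ssubst th F1)
  | FAnd F0 F1 => FAnd (ssubst th F0) (ssubst th F1)
  | FEx1 F => FEx1 (ssubst th F)
  | FAll1 F => FAll1 (ssubst th F)
  | FEx2 n F => FEx2 n (ssubst th F)
  | FAll2 n F => FAll2 n (ssubst th F)
  end.

(* local closure: dangling first-order indices < d1, dangling second-order
   indices of arity n < d2 n; all second-order arities are >= 1 *)
Definition iterm_lc (d1 : nat) (t : iterm C) : bool :=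
  match t with IB i => i < d1 | IC _ => true end.

Fixpoint lcf (d1 : nat) (d2 : nat -> nat) (F : fm C K) : Prop :=
  match F with
  | FAtom n p ts =>
      0 < n /\ all (iterm_lc d1) ts /\
      (match p with PB i => i < d2 n | PC _ => true end)
  | FNot F => lcf d1 d2 F
  | FOr F0 F1 => lcf d1 d2 F0 /\ lcf d1 d2 F1
  | FAnd F0 F1 => lcf d1 d2 F0 /\ lcf d1 d2 F1
  | FEx1 F => lcf d1.+1 d2 F
  | FAll1 F => lcf d1.+1 d2 F
  | FEx2 m F => 0 < m /\ lcf d1 (fun n => if n == m then (d2 n).+1 else d2 n) F
  | FAll2 m F => 0 < m /\ lcf d1 (fun n => if n == m then (d2 n).+1 else d2 n) F
  end.

End Syntax.

(* renaming of constants (used for F(alpha_1,...,alpha_k)) *)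
Section Map.
Variables (C C' : Type) (K K' : nat -> Type).
Variables (f : C -> C') (g : forall n, K n -> K' n).
Definition iterm_map (t : iterm C) : iterm C' :=
  match t with IB i => IB i | IC c => IC (f c) end.
Definition patom_map n (p : patom K n) : patom K' n :=
  match p with PB i => PB i | PC k => PC (g k) end.
Fixpoint fm_map (F : fm C K) : fm C' K' :=
  match F with
  | FAtom n p ts => FAtom (patom_map p) (map_tuple iterm_map ts)
  | FNot F => FNot (fm_map F)
  | FOr F0 F1 => FOr (fm_map F0) (fm_map F1)
  | FAnd F0 F1 => FAnd (fm_map F0) (fm_map F1)
  | FEx1 F => FEx1 (fm_map F)
  | FAll1 F => FAll1 (fm_map F)
  | FEx2 n F => FEx2 n (fm_map F)
  | FAll2 n F => FAll2 n (fm_map F)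
  end.
End Map.

(* The base language: Tm_0 = variables (names : nat); free second-order *)
(* variables of arity n are names : nat.                                *)
Definition Tm0 := nat.
Definition formula := fm Tm0 (fun _ : nat => nat).
Definition is_formula (F : formula) : Prop := lcf 0 (fun _ => 0) F.
Definition is_abs (n : nat) (T : formula) : Prop := 0 < n /\ lcf n (fun _ => 0) T.

Section Valuation.
Context {disp : Order.disp_t} (B : ctbDistrLatticeType disp) (cB : completeness B).

Definition semi_valuation (V : formula -> DB B) : Prop :=
  (forall F, is_formula (FNot F) -> trile (V (FNot F)) (negDB (V F))) /\
  (forall F0 F1, is_formula (FOr F0 F1) ->
     trile (V (FOr F0 F1)) (supDB cB (pair2 (V F0) (V F1)))) /\
  (forall F0 F1, is_formula (FAnd F0 F1) ->
     trile (V (FAnd F0 F1)) (infDB cB (pair2 (V F0) (V F1)))) /\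
  (forall F, is_formula (FEx1 F) ->
     trile (V (FEx1 F)) (supDB cB (fun a => exists t : Tm0, a = V (fopen t F)))) /\
  (forall F, is_formula (FAll1 F) ->
     trile (V (FAll1 F)) (infDB cB (fun a => exists t : Tm0, a = V (fopen t F)))) /\
  (forall n F, is_formula (FEx2 n F) ->
     trile (V (FEx2 n F))
       (supDB cB (fun a => exists T, is_abs n T /\ a = V (sopen n 0 T F)))) /\
  (forall n F, is_formula (FAll2 n F) ->
     trile (V (FAll2 n F))
       (infDB cB (fun a => exists T, is_abs n T /\ a = V (sopen n 0 T F)))).

Definition Vabs (V : formula -> DB B) (n : nat) (T : formula) : n.-tuple Tm0 -> DB B :=
  fun ts => V (inst T (map IC ts)).

Record model := Model {
  mD0 : Type;
  md0 : mD0;                                    (* D_0 is nonempty *)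
  mD1 : forall n, (n.-tuple mD0 -> DB B) -> Prop
}.

Arguments mD0 _ : clear implicits.
Arguments md0 _ : clear implicits.
Arguments mD1 _ _ _ : clear implicits.

(* relation constants: functions D_0^n -> DB *)
Definition Krel (D0 : Type) : nat -> Type := fun n => n.-tuple D0 -> DB B.

Definition scons (D0 : Type) (t : D0) (r : nat -> D0) : nat -> D0 :=
  fun i => match i with 0 => t | j.+1 => r j end.

Definition push (D0 : Type) (m : nat) (al : m.-tuple D0 -> DB B)
    (r : forall n, nat -> Krel D0 n) : forall n, nat -> Krel D0 n :=
  fun n i =>
    match @eqP _ m n with
    | ReflectT e => match i with
                    | 0 => eq_rect m (fun k => Krel D0 k) al n e
                    | j.+1 => r n j end
    | ReflectF _ => r n i
    end.

Variable M : model.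

Definition term_val (r1 : nat -> mD0 M) (t : iterm (mD0 M)) : mD0 M :=
  match t with IB i => r1 i | IC c => c end.
Definition rel_val (r2 : forall n, nat -> Krel (mD0 M) n) n (p : patom (Krel (mD0 M)) n)
  : Krel (mD0 M) n :=
  match p with PB i => r2 n i | PC al => al end.

(* The value M(F); the environments r1, r2 give the values of dangling bound
   variables, so that Meval r1 r2 F = M(F(r1,r2)) (opening by constants).
   On sentences the environments are irrelevant. *)
Fixpoint Meval (r1 : nat -> mD0 M) (r2 : forall n, nat -> Krel (mD0 M) n)
    (F : fm (mD0 M) (Krel (mD0 M))) : DB B :=
  match F with
  | FAtom n p ts => rel_val r2 p (map_tuple (term_val r1) ts)
  | FNot F => negDB (Meval r1 r2 F)
  | FOr F0 F1 => supDB cB (pair2 (Meval r1 r2 F0) (Meval r1 r2 F1))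
  | FAnd F0 F1 => infDB cB (pair2 (Meval r1 r2 F0) (Meval r1 r2 F1))
  | FEx1 F => supDB cB (fun a => exists t : mD0 M, a = Meval (scons t r1) r2 F)
  | FAll1 F => infDB cB (fun a => exists t : mD0 M, a = Meval (scons t r1) r2 F)
  | FEx2 m F => supDB cB (fun a => exists al, mD1 M m al /\ a = Meval r1 (push al r2) F)
  | FAll2 m F => infDB cB (fun a => exists al, mD1 M m al /\ a = Meval r1 (push al r2) F)
  end.

Definition env2_default : forall n, nat -> Krel (mD0 M) n := fun n _ _ => botDB B.

Definition Mval (F : fm (mD0 M) (Krel (mD0 M))) : DB B :=
  Meval (fun _ => md0 M) env2_default F.

Definition pure_formula := fm Empty_set (fun _ : nat => Empty_set).
Definition embed (G : pure_formula) : fm (mD0 M) (Krel (mD0 M)) :=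
  fm_map (fun c : Empty_set => match c with end)
         (fun n (k : Empty_set) => match k with end) G.

(* M |= 3CA: for every formula G(x_1,...,x_n,X^k) (x_(i+1) = dangling
   first-order index i, X^k = dangling second-order index 0 of arity k)
   and every beta in D_1^(k) there is alpha in D_1^(n) with
   alpha <| M(\x.G(x,beta)), i.e. alpha(ts) <| M(G(ts,beta)) for all ts. *)
Definition models_3CA : Prop :=
  forall (n k : nat) (G : pure_formula),
    0 < n -> 0 < k ->
    lcf n (fun m => if m == k then 1 else 0) G ->
    forall beta, mD1 M k beta ->
    exists al, mD1 M n al /\
      forall ts : n.-tuple (mD0 M),
        trile (al ts) (Meval (fun i => nth (md0 M) ts i) (push beta env2_default) (embed G)).

End Valuation.

Definition canon_model {disp : Order.disp_t} (B : ctbDistrLatticeType disp)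
    (V : formula -> DB B) : model B :=
  {| mD0 := Tm0; md0 := 0%N;
     mD1 := fun n al => exists T, is_abs n T /\ al = Vabs V T |}.

Arguments Mval {disp B} cB M F.
Arguments Meval {disp B} cB M r1 r2 F.
Arguments models_3CA {disp B} cB M.

From mathcomp Require Import all_boot all_order zify.
From Stdlib Require Import FunctionalExtensionality PropExtensionality.
Set Implicit Arguments. Unset Strict Implicit. Unset Printing Implicit Defensive.
Import Order.Theory.

(* Part (1) is proved by induction on the size of F, for all substitutions
   th of abstracts for the free second-order variables at once.  A
   semi-valuation bounds V(QxF) by sup_< or inf_< of the values of the
   instances of F; by induction each of these lies below (<|) the model value
   of the matching instance, and as D_1 consists exactly of the V(T) both
   families are indexed by the same terms and abstracts.  Since sup_< and
   inf_< are monotone for families matched in this way, the bound carries over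
   to the quantified formula.  To make the induction hypothesis apply to
   F(T) for a second-order quantifier, the bound variable is opened with a
   fresh free name j and th is extended by j |-> T.  For (2), given
   beta = V(T_beta) take alpha = V(\x. G(x, T_beta)), which is below
   M(\x. G(x, beta)) by (1). *)

Section TriangleOrder.
Context {disp : Order.disp_t} (B : ctbDistrLatticeType disp) (cB : completeness B).
Local Open Scope order_scope.
Implicit Types (a b c : DB B) (S : DB B -> Prop).

Lemma trile_refl a : trile a a.
Proof. by split. Qed.

Lemma trile_trans a b c : trile a b -> trile b c -> trile a c.
Proof. by move=> [h1 h2] [h3 h4]; split; [apply: le_trans h3 | apply: le_trans h2]. Qed.

Lemma trile_neg a b : trile a b -> trile (negDB a) (negDB b).
Proof. by move=> [h1 h2]; split; rewrite /box /dia /= leC. Qed.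

Definition matched S S' : Prop :=
  (forall a, S a -> exists2 b, S' b & trile a b) /\
  (forall b, S' b -> exists2 a, S a & trile a b).

Lemma supDB_matched S S' : matched S S' -> trile (supDB cB S) (supDB cB S').
Proof.
move=> [H1 H2]; split; apply: (proj2 (csupP cB _)) => _ [a [Sa <-]].
- have [b S'b [ab _]] := H1 a Sa.
  by apply: le_trans ab _; apply: (proj1 (csupP cB _)); exists b.
- have [b Sb [_ ba]] := H2 a Sa.
  by apply: le_trans ba _; apply: (proj1 (csupP cB _)); exists b.
Qed.

Lemma infDB_matched S S' : matched S S' -> trile (infDB cB S) (infDB cB S').
Proof.
move=> [H1 H2]; split; apply: cinf_glb => _ [a [Sa <-]].
- have [b Sb [ba _]] := H2 a Sa.
  by apply: le_trans ba; apply: cinf_lb; exists b.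
- have [b S'b [_ ab]] := H1 a Sa.
  by apply: le_trans ab; apply: cinf_lb; exists b.
Qed.

Lemma matched_pair2 a0 a1 b0 b1 :
  trile a0 b0 -> trile a1 b1 -> matched (pair2 a0 a1) (pair2 b0 b1).
Proof.
by move=> h0 h1; split=> _ [->|->]; [exists b0 | exists b1 | exists a0 | exists a1];
  rewrite /pair2; auto.
Qed.

Lemma matched_range I (f g : I -> DB B) : (forall i, trile (f i) (g i)) ->
  matched (fun a => exists i, a = f i) (fun b => exists i, b = g i).
Proof. by move=> fg; split=> _ [i ->]; [exists (g i) | exists (f i)]; try exists i. Qed.

Lemma matched_image I J (P : I -> Prop) (Q : J -> Prop) (h : I -> J)
    (f : I -> DB B) (g : J -> DB B) :
  (forall j, Q j <-> exists2 i, P i & j = h i) ->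
  (forall i, P i -> trile (f i) (g (h i))) ->
  matched (fun a => exists i, P i /\ a = f i) (fun b => exists j, Q j /\ b = g j).
Proof.
move=> Qh fg; split.
- move=> _ [i [Pi ->]]; exists (g (h i)); last exact: fg.
  by exists (h i); split=> //; apply/Qh; exists i.
- move=> _ [_ [/Qh[i Pi ->] ->]]; exists (f i); last exact: fg.
  by exists i.
Qed.

Lemma supDB_ext S S' : (forall a, S a <-> S' a) -> supDB cB S = supDB cB S'.
Proof.
by move=> SS'; congr supDB; apply: functional_extensionality => a;
  apply: propositional_extensionality.
Qed.

Lemma infDB_ext S S' : (forall a, S a <-> S' a) -> infDB cB S = infDB cB S'.
Proof.
by move=> SS'; congr infDB; apply: functional_extensionality => a;
  apply: propositional_extensionality.
Qed.

End TriangleOrder.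

Lemma eq_map_all (A A' : Type) (P : pred A) (f g : A -> A') (s : seq A) :
  all P s -> (forall x, P x -> f x = g x) -> map f s = map g s.
Proof. by elim: s => //= x s IH /andP[Px Ps] fg; rewrite fg // IH. Qed.

Section Substitution.
Variables (C : Type) (K : nat -> Type).
Implicit Types (s : nat -> iterm C) (F G T : fm C K).

Fixpoint fsize F : nat :=
  match F with
  | FAtom _ _ _ => 0
  | FNot F => (fsize F).+1
  | FOr F0 F1 | FAnd F0 F1 => (fsize F0 + fsize F1).+1
  | FEx1 F | FAll1 F | FEx2 _ F | FAll2 _ F => (fsize F).+1
  end.

Lemma fsize_fsubst s F : fsize (fsubst s F) = fsize F.
Proof. by elim: F s => //= *; congruence. Qed.

Lemma eq_fsubst_lc d1 d2 F s s' : lcf d1 d2 F -> (forall i, i < d1 -> s i = s' i) ->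
  fsubst s F = fsubst s' F.
Proof.
elim: F d1 d2 s s' => /= [n p ts|F IH|F0 IH0 F1 IH1|F0 IH0 F1 IH1|F IH|F IH|m F IH|m F IH]
  d1 d2 s s'.
- move=> [_ [ts_lc _]] ss'; congr FAtom; apply: val_inj => /=.
  by apply: (eq_map_all ts_lc) => -[] //= i /ss'->.
- by move=> h ss'; rewrite (IH _ _ _ _ h ss').
- by move=> [h0 h1] ss'; rewrite (IH0 _ _ _ _ h0 ss') (IH1 _ _ _ _ h1 ss').
- by move=> [h0 h1] ss'; rewrite (IH0 _ _ _ _ h0 ss') (IH1 _ _ _ _ h1 ss').
all: try by move=> [_ h] ss'; rewrite (IH _ _ _ _ h ss').
all: by move=> h ss'; rewrite (IH _ _ _ (up s') h) // => -[|i] //= /ss'->.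
Qed.

Lemma up_comp s s' :
  up (fun i => iterm_subst s (s' i)) = (fun i => iterm_subst (up s) (up s' i)).
Proof. by apply: functional_extensionality => -[|i] //=; case: (s' i). Qed.

Lemma fsubst_comp s s' F :
  fsubst s (fsubst s' F) = fsubst (fun i => iterm_subst s (s' i)) F.
Proof.
elim: F s s' => /= [n p ts|F IH|F0 IH0 F1 IH1|F0 IH0 F1 IH1|F IH|F IH|m F IH|m F IH] s s';
  rewrite ?IH ?IH0 ?IH1 ?up_comp //.
congr FAtom; apply: val_inj => /=.
by rewrite -map_comp; apply: eq_map => -[].
Qed.

Lemma fsubst_inst d2 n T (ts : seq (iterm C)) s : lcf n d2 T -> size ts = n ->
  fsubst s (inst T ts) = inst T (map (iterm_subst s) ts).
Proof.
move=> T_lc ts_n; rewrite /inst fsubst_comp; apply: eq_fsubst_lc T_lc _ => i i_lt.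
by rewrite (nth_map (IB 0)) // ts_n.
Qed.

Lemma lcf_widen2 d1 d2 d2' F : (forall n, d2 n <= d2' n) -> lcf d1 d2 F -> lcf d1 d2' F.
Proof.
elim: F d1 d2 d2' => /= [n p ts|F IH|F0 IH0 F1 IH1|F0 IH0 F1 IH1|F IH|F IH|m F IH|m F IH]
  d1 d2 d2' le_d2.
- by case: p => [i|c] [? [? i_lt]]; do 2 split=> //; apply: leq_trans i_lt (le_d2 n).
- exact: IH.
- by case=> /(IH0 _ _ _ le_d2) ? /(IH1 _ _ _ le_d2).
- by case=> /(IH0 _ _ _ le_d2) ? /(IH1 _ _ _ le_d2).
- exact: IH.
- exact: IH.
all: case=> m_gt0 F_lc; split=> //; apply: IH F_lc => k.
all: by case: (k == m); rewrite ?ltnS.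
Qed.

Lemma lcf_fsubst d1 d1' d2 F s : (forall i, i < d1 -> iterm_lc d1' (s i)) ->
  lcf d1 d2 F -> lcf d1' d2 (fsubst s F).
Proof.
elim: F d1 d1' d2 s => /= [n p ts|F IH|F0 IH0 F1 IH1|F0 IH0 F1 IH1|F IH|F IH|m F IH|m F IH]
  d1 d1' d2 s s_lc.
- case=> n_gt0 [ts_lc p_lc]; do 2 split=> //.
  by rewrite all_map; apply: sub_all ts_lc => -[] //= i /s_lc.
- exact: IH.
- by case=> /(IH0 _ _ _ _ s_lc) ? /(IH1 _ _ _ _ s_lc).
- by case=> /(IH0 _ _ _ _ s_lc) ? /(IH1 _ _ _ _ s_lc).
all: try by case=> m_gt0 /(IH _ _ _ _ s_lc).
all: by apply: IH => -[|i] //= /s_lc; case: (s i).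
Qed.

Lemma sopen_fsubst_closed d1 d2 G m k T s : d2 m <= k -> lcf d1 d2 G ->
  sopen m k T (fsubst s G) = fsubst s G.
Proof.
elim: G d1 d2 k s => /= [n p ts|F IH|F0 IH0 F1 IH1|F0 IH0 F1 IH1|F IH|F IH|n F IH|n F IH]
  d1 d2 k s le_k.
- case: p => [i|c] [_ [_ //= i_lt]]; case: eqP => [nm|//]; subst n.
  have i_lt_k : i < k by apply: leq_trans i_lt le_k.
  by rewrite (ltn_eqF i_lt_k) ltEnat /= ltnNge ltnW.
- by move/(IH _ _ _ s le_k)->.
- by case=> /(IH0 _ _ _ s le_k)-> /(IH1 _ _ _ s le_k)->.
- by case=> /(IH0 _ _ _ s le_k)-> /(IH1 _ _ _ s le_k)->.
- by move/(IH _ _ _ (up s) le_k)->.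
- by move/(IH _ _ _ (up s) le_k)->.
all: by case=> _ /IH ->; rewrite // (eq_sym m n); case: (n == m).
Qed.

Lemma sopen_fsubst d2 G m k T s : lcf m d2 T ->
  sopen m k T (fsubst s G) = fsubst s (sopen m k T G).
Proof.
move=> T_lc; elim: G k s => /= [n p ts|F IH|F0 IH0 F1 IH1|F0 IH0 F1 IH1|F IH|F IH|n F IH|n F IH]
  k s; rewrite ?IH ?IH0 ?IH1 //.
case: p => //= i; case: eqP => [nm|//]; subst n.
case: eqP => [_|_]; first by rewrite (fsubst_inst s T_lc) ?size_tuple.
by case: ifP.
Qed.

End Substitution.

Definition is_abs_subst (th : forall n : nat, nat -> formula) : Prop :=
  forall n j, 0 < n -> is_abs n (th n j).

Definition update_abs (th : forall n : nat, nat -> formula) (n j : nat) (T : formula) :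
    forall m : nat, nat -> formula :=
  fun m i => if (m == n) && (i == j) then T else th m i.

(* [sname m k j F] is [sopen m k] with the free name [j] in place of an
   abstract. *)
Fixpoint sname (m k j : nat) (F : formula) : formula :=
  match F with
  | FAtom n p ts =>
      match p with
      | PB i => if n == m then
                  (if i == k then FAtom (@PC _ n j) ts
                   else if k < i then FAtom (@PB (fun _ => nat) n i.-1) ts
                   else FAtom (@PB (fun _ => nat) n i) ts)
                else FAtom p ts
      | PC _ => FAtom p ts
      end
  | FNot F => FNot (sname m k j F)
  | FOr F0 F1 => FOr (sname m k j F0) (sname m k j F1)
  | FAnd F0 F1 => FAnd (sname m k j F0) (sname m k j F1)
  | FEx1 F => FEx1 (sname m k j F)
  | FAll1 F => FAll1 (sname m k j F)
  | FEx2 n F => FEx2 n (sname m (if n == m then k.+1 else k) j F)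
  | FAll2 n F => FAll2 n (sname m (if n == m then k.+1 else k) j F)
  end.

Fixpoint names_lt (j : nat) (F : formula) : Prop :=
  match F with
  | FAtom n p ts => match p with PC i => (i : nat) < j | PB _ => True end
  | FNot F => names_lt j F
  | FOr F0 F1 | FAnd F0 F1 => names_lt j F0 /\ names_lt j F1
  | FEx1 F | FAll1 F | FEx2 _ F | FAll2 _ F => names_lt j F
  end.

Fixpoint names_ub (F : formula) : nat :=
  match F with
  | FAtom n p ts => match p with PC i => (i : nat).+1 | PB _ => 0 end
  | FNot F => names_ub F
  | FOr F0 F1 | FAnd F0 F1 => maxn (names_ub F0) (names_ub F1)
  | FEx1 F | FAll1 F | FEx2 _ F | FAll2 _ F => names_ub F
  end.

Lemma names_lt_widen j j' F : j <= j' -> names_lt j F -> names_lt j' F.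
Proof.
by move=> le_j; elim: F => /= [n [i|c] ts //|*|*|*|*|*|*|*]; intuition;
  apply: leq_trans le_j.
Qed.

Lemma names_lt_ub F : names_lt (names_ub F) F.
Proof.
elim: F => /= [n [i|c] ts //|//|F0 h0 F1 h1|F0 h0 F1 h1|//|//|//|//].
all: by split; [apply: names_lt_widen h0; apply: leq_maxl
                | apply: names_lt_widen h1; apply: leq_maxr].
Qed.

Lemma names_lt_fsubst j s F : names_lt j F -> names_lt j (fsubst s F).
Proof. by elim: F s => /=; intuition. Qed.

Lemma ssubst_names_lt0 th F : names_lt 0 F -> ssubst th F = F.
Proof. by elim: F => /= [n [i|c] ts //|*|*|*|*|*|*|*]; intuition congruence. Qed.

Lemma fsize_sname m k j F : fsize (sname m k j F) = fsize F.
Proof.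
elim: F k => /= [n [i|c] ts|F IH|F0 IH0 F1 IH1|F0 IH0 F1 IH1|F IH|F IH|n F IH|n F IH] k;
  rewrite ?IH ?IH0 ?IH1 //.
by case: eqP => // _; case: eqP => // _; case: ifP.
Qed.

Lemma lcf_ssubst th d1 d2 F : is_abs_subst th -> lcf d1 d2 F -> lcf d1 d2 (ssubst th F).
Proof.
move=> th_abs.
elim: F d1 d2 => /= [n [i|j] ts|F IH|F0 IH0 F1 IH1|F0 IH0 F1 IH1|F IH|F IH|m F IH|m F IH]
  d1 d2 //.
- case=> n_gt0 [ts_lc _]; have [_ T_lc] := th_abs n j n_gt0.
  apply: lcf_widen2 (lcf_fsubst _ T_lc) => // i i_lt.
  by apply: (all_nthP (IB 0) ts_lc); rewrite size_tuple.
- exact: IH.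
- by case=> /IH0 ? /IH1.
- by case=> /IH0 ? /IH1.
- exact: IH.
- exact: IH.
all: by case=> ? /IH.
Qed.

Lemma fsubst_ssubst th d1 d2 F s : is_abs_subst th -> lcf d1 d2 F ->
  fsubst s (ssubst th F) = ssubst th (fsubst s F).
Proof.
move=> th_abs.
elim: F d1 d2 s => /= [n [i|j] ts|F IH|F0 IH0 F1 IH1|F0 IH0 F1 IH1|F IH|F IH|m F IH|m F IH]
  d1 d2 s //.
- case=> n_gt0 _; have [_ T_lc] := th_abs n j n_gt0.
  by rewrite (fsubst_inst s T_lc) ?size_tuple.
- by move/IH->.
- by case=> /IH0-> /IH1->.
- by case=> /IH0-> /IH1->.
- by move/IH->.
- by move/IH->.
all: by case=> _ /IH->.
Qed.

Lemma lcf_sname n k j d1 d2 F : k < d2 n -> lcf d1 d2 F ->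
  lcf d1 (fun m => if m == n then (d2 m).-1 else d2 m) (sname n k j F).
Proof.
elim: F k d1 d2 => /= [n' [i|c] ts|F IH|F0 IH0 F1 IH1|F0 IH0 F1 IH1|F IH|F IH|m F IH|m F IH]
  k d1 d2 k_lt.
- case=> n'_gt0 [ts_lc i_lt]; case: eqP => [e|/eqP ne] /=; last by rewrite (negPf ne).
  subst n.
  move: i_lt; rewrite ltEnat /= => i_lt.
  by case: eqP => [_|ne] /=; [|case: ifP => /= k_i]; rewrite ?eqxx ?ltEnat /=;
  do 2 split=> //; lia.
- by [].
- exact: IH.
- by case=> /(IH0 _ _ _ k_lt) ? /(IH1 _ _ _ k_lt).
- by case=> /(IH0 _ _ _ k_lt) ? /(IH1 _ _ _ k_lt).
- exact: IH.
- exact: IH.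
all: case=> m_gt0 F_lc; split=> //.
all: have := IH (if m == n then k.+1 else k) _ _ _ F_lc; rewrite (eq_sym n m).
all: case: (eqVneq m n) => [->|ne] /(_ k_lt) /lcf_widen2; apply=> x.
all: by do ! case: eqP => //= ?; subst; rewrite -?subn1; lia.
Qed.

Lemma lcf_sname0 n j d1 F : lcf d1 (fun m => if m == n then 1 else 0) F ->
  lcf d1 (fun _ => 0) (sname n 0 j F).
Proof.
move=> F_lc; have pos : 0 < (fun m => if m == n then 1 else 0) n by rewrite /= eqxx.
by apply: lcf_widen2 (lcf_sname j pos F_lc) => m; case: eqP.
Qed.

Lemma is_abs_subst_update th n j T :
  is_abs_subst th -> is_abs n T -> is_abs_subst (update_abs th n j T).
Proof.
move=> th_abs T_abs m i m_gt0; rewrite /update_abs.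
by case: ifP => [/andP[/eqP-> _] //|_]; apply: th_abs.
Qed.

Lemma ssubst_update_sname n j T th d1 d2 F k :
  is_abs_subst th -> lcf d1 d2 F -> names_lt j F ->
  ssubst (update_abs th n j T) (sname n k j F) = sopen n k T (ssubst th F).
Proof.
move=> th_abs.
elim: F k d1 d2 => /= [n' [i|c] ts|F IH|F0 IH0 F1 IH1|F0 IH0 F1 IH1|F IH|F IH|m F IH|m F IH]
  k d1 d2.
- move=> _ _; case: (eqVneq n' n) => [<-|ne]; rewrite /= ?eqxx ?(negPf ne) //.
  by case: eqP => [_|_] /=; [rewrite /update_abs !eqxx | case: ifP].
- case=> n'_gt0 _ c_lt; have [_ th_lc] := th_abs n' c n'_gt0.
  by rewrite /= /update_abs (ltn_eqF c_lt) andbF (sopen_fsubst_closed _ _ _ th_lc).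
- by move=> /IH h /h->.
- by case=> /IH0 h0 /IH1 h1 [/h0-> /h1->].
- by case=> /IH0 h0 /IH1 h1 [/h0-> /h1->].
- by move=> /IH h /h->.
- by move=> /IH h /h->.
all: by case=> _ /IH h /h->; rewrite (eq_sym m n).
Qed.

Lemma fm_map_fsubst (C : Type) (K K' : nat -> Type) (g : forall n, K n -> K' n) s
    (F : fm C K) :
  fm_map id g (fsubst s F) = fsubst s (fm_map id g F).
Proof.
elim: F s => /= [n p ts|F IH|F0 IH0 F1 IH1|F0 IH0 F1 IH1|F IH|F IH|m F IH|m F IH] s;
  rewrite ?IH ?IH0 ?IH1 //.
congr FAtom; apply: val_inj => /=.
by rewrite -!map_comp; apply: eq_map => -[i|c] //=; case: (s i).
Qed.

Section ModelSemantics.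
Context {disp : Order.disp_t} (B : ctbDistrLatticeType disp) (cB : completeness B).

Lemma term_val_up (M : model B) (r1 : nat -> mD0 M) t s :
  scons t (fun i => term_val r1 (s i)) = (fun i => term_val (scons t r1) (up s i)).
Proof. by apply: functional_extensionality => -[|i] //=; case: (s i). Qed.

Lemma Meval_fsubst (M : model B) G r1 r2 s :
  Meval cB M r1 r2 (fsubst s G) = Meval cB M (fun i => term_val r1 (s i)) r2 G.
Proof.
elim: G r1 r2 s => /= [n p ts|F IH|F0 IH0 F1 IH1|F0 IH0 F1 IH1|F IH|F IH|m F IH|m F IH]
  r1 r2 s; rewrite ?IH ?IH0 ?IH1 //.
- congr (rel_val _ _); apply: val_inj => /=.
  by rewrite -map_comp; apply: eq_map => -[].
- by apply: supDB_ext => a; split=> -[t ->]; exists t; rewrite IH term_val_up.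
- by apply: infDB_ext => a; split=> -[t ->]; exists t; rewrite IH term_val_up.
- by apply: supDB_ext => a; split=> -[al [? ->]]; exists al; rewrite IH.
- by apply: infDB_ext => a; split=> -[al [? ->]]; exists al; rewrite IH.
Qed.

Lemma push_ne (D0 : Type) m (al : m.-tuple D0 -> DB B) r n i :
  m <> n -> push al r i = r n i.
Proof. by rewrite /push; case: eqP. Qed.

Lemma push0 (D0 : Type) m (al : m.-tuple D0 -> DB B) r : push al r (n:=m) 0 = al.
Proof. by rewrite /push; case: eqP => // e; rewrite (eq_irrelevance e erefl). Qed.

Lemma pushS (D0 : Type) m (al : m.-tuple D0 -> DB B) r i : push al r (n:=m) i.+1 = r m i.
Proof. by rewrite /push; case: eqP. Qed.

End ModelSemantics.

Section CanonicalModel.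
Context {disp : Order.disp_t} (B : ctbDistrLatticeType disp) (cB : completeness B).
Variable V : formula -> DB B.

Notation M := (canon_model V).
Notation env2 := (forall m, nat -> Krel B Tm0 m).
Notation gV th := (fun n j => Vabs V (th n j)).

(* [r2'] is [r2] with [al] inserted at index [k] of arity [n]. *)
Definition env_insert n k (al : n.-tuple Tm0 -> DB B) (r2 r2' : env2) : Prop :=
  [/\ (forall i ts, i < k -> r2 n i ts = r2' n i ts),
      (forall ts, r2' n k ts = al ts),
      (forall i ts, k < i -> r2 n i.-1 ts = r2' n i ts) &
      (forall m i ts, m <> n -> r2 m i ts = r2' m i ts)].

Lemma env_insert_push n k (al : n.-tuple Tm0 -> DB B) r2 r2' m (be : m.-tuple Tm0 -> DB B) :
  env_insert k al r2 r2' ->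
  env_insert (if m == n then k.+1 else k) al (push be r2) (push be r2').
Proof.
case=> below atk above other; case: (eqVneq m n) => [e|mn]; first subst m.
all: split.
- by move=> [|i] ts i_lt; rewrite ?push0 ?pushS // below.
- by move=> ts; rewrite pushS atk.
- by move=> [|[|i]] ts //= i_gt; rewrite !pushS; apply: (above i.+1).
- by move=> m' i ts m'n; rewrite !push_ne ?other // => e; apply: m'n.
- by move=> i ts i_lt; rewrite !push_ne ?below //; apply/eqP.
- by move=> ts; rewrite push_ne ?atk //; apply/eqP.
- by move=> i ts i_gt; rewrite !push_ne ?above //; apply/eqP.
- move=> m' i ts m'n; case: (eqVneq m' m) => [e|m'm].
  + subst m'; by case: i => [|i]; rewrite ?push0 ?pushS // other.
  + by rewrite !push_ne ?other //; apply/eqP; rewrite eq_sym.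
Qed.

Lemma env_insert_top n (al : n.-tuple Tm0 -> DB B) :
  env_insert 0 al (env2_default (M:=M)) (push al (env2_default (M:=M))).
Proof.
split=> //; first by move=> ts; rewrite push0.
- by move=> [|i] ts // _; rewrite pushS.
- by move=> m i ts mn; rewrite push_ne // => e; apply: mn.
Qed.

Lemma Meval_sname n j (al : n.-tuple Tm0 -> DB B) (g g' : env2) F k r1 r2 r2' :
  names_lt j F -> (forall ts, g' n j ts = al ts) ->
  (forall m i ts, i < j -> g' m i ts = g m i ts) -> env_insert k al r2 r2' ->
  Meval cB M r1 r2 (fm_map id g' (sname n k j F)) = Meval cB M r1 r2' (fm_map id g F).
Proof.
move=> + g'j g'g; elim: F k r1 r2 r2' => /=
  [n' [i|c] ts|F IH|F0 IH0 F1 IH1|F0 IH0 F1 IH1|F IH|F IH|m F IH|m F IH] k r1 r2 r2'.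
- move=> _ [below atk above other]; case: eqP => [e|n'n] /=; last by rewrite other.
  subst n'.
  case: eqP => [->|ik] /=; first by rewrite atk g'j.
  by case: ifP => k_i /=; [rewrite above | rewrite below] => //; lia.
- by move=> c_lt _ /=; rewrite g'g.
- by move=> F_j /(IH _ r1 _ _ F_j)->.
- by move=> [F0_j F1_j] ins; rewrite (IH0 _ _ _ _ F0_j ins) (IH1 _ _ _ _ F1_j ins).
- by move=> [F0_j F1_j] ins; rewrite (IH0 _ _ _ _ F0_j ins) (IH1 _ _ _ _ F1_j ins).
- move=> F_j ins; apply: supDB_ext => a.
  by split=> -[t ->]; exists t; rewrite (IH _ _ _ _ F_j ins).
- move=> F_j ins; apply: infDB_ext => a.
  by split=> -[t ->]; exists t; rewrite (IH _ _ _ _ F_j ins).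
- move=> F_j ins; apply: supDB_ext => a.
  by split=> -[be [? ->]]; exists be; rewrite (IH _ _ _ _ F_j (env_insert_push be ins)).
- move=> F_j ins; apply: infDB_ext => a.
  by split=> -[be [? ->]]; exists be; rewrite (IH _ _ _ _ F_j (env_insert_push be ins)).
Qed.

Lemma Mval_update_sname n j T th F : names_lt j F ->
  Mval cB M (fm_map id (gV (update_abs th n j T)) (sname n 0 j F)) =
  Meval cB M (fun _ => 0) (push (Vabs V (n:=n) T) (env2_default (M:=M))) (fm_map id (gV th) F).
Proof.
move=> F_j; apply: Meval_sname F_j _ _ (env_insert_top _) => [ts|m i ts i_lt].
- by rewrite /update_abs !eqxx.
- by rewrite /update_abs (ltn_eqF i_lt) andbF.
Qed.

End CanonicalModel.

Lemma lcf_fm_map (C C' : Type) (K K' : nat -> Type) (f : C -> C') (g : forall n, K n -> K' n)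
    d1 d2 (G : fm C K) :
  lcf d1 d2 G -> lcf d1 d2 (fm_map f g G).
Proof.
elim: G d1 d2 => /= [n p ts|F IH|F0 IH0 F1 IH1|F0 IH0 F1 IH1|F IH|F IH|m F IH|m F IH] d1 d2.
- case=> n_gt0 [ts_lc p_lc]; do 2 split=> //; last by case: p p_lc.
  by rewrite all_map; apply: sub_all ts_lc => -[].
- exact: IH.
- by case=> /IH0 ? /IH1.
- by case=> /IH0 ? /IH1.
- exact: IH.
- exact: IH.
all: by case=> ? /IH.
Qed.

Lemma fm_map_comp (C C' C'' : Type) (K K' K'' : nat -> Type)
    (f : C' -> C'') (g : forall n, K' n -> K'' n) (f' : C -> C') (g' : forall n, K n -> K' n)
    (f'' : C -> C'') (g'' : forall n, K n -> K'' n) (F : fm C K) :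
  f \o f' =1 f'' -> (forall n, g n \o g' n =1 g'' n) ->
  fm_map f g (fm_map f' g' F) = fm_map f'' g'' F.
Proof.
move=> ff' gg'.
elim: F => /= [n p ts|F IH|F0 IH0 F1 IH1|F0 IH0 F1 IH1|F IH|F IH|m F IH|m F IH];
  rewrite ?IH ?IH0 ?IH1 //.
congr FAtom; first by case: p => //= c; rewrite -gg'.
by apply: val_inj => /=; rewrite -map_comp; apply: eq_map => -[] //= c; rewrite -ff'.
Qed.

Definition formula_of_pure (G : pure_formula) : formula :=
  fm_map (fun c : Empty_set => match c with end) (fun n (c : Empty_set) => match c with end) G.

Lemma names_lt0_pure G : names_lt 0 (formula_of_pure G).
Proof.
by elim: G => /= [n [i|[]] ts|F IH|F0 IH0 F1 IH1|F0 IH0 F1 IH1|F IH|F IH|m F IH|m F IH].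
Qed.

(* Any abstract of arity [m] would do: it fills the substitution at names
   that do not occur. *)
Definition dummy_abs (m : nat) : formula := FAtom (@PC _ m 0) (nseq_tuple m (IB 0)).

Lemma is_abs_subst_dummy : is_abs_subst (fun m _ => dummy_abs m).
Proof. by move=> m _ m_gt0; do 3 split=> //; rewrite all_nseq; case: m m_gt0. Qed.

Section Soundness.
Context {disp : Order.disp_t} (B : ctbDistrLatticeType disp) (cB : completeness B).
Variable V : formula -> DB B.
Hypothesis V_semi : semi_valuation cB V.

Notation M := (canon_model V).
Notation r0 := (fun _ : nat => 0%N).
Notation gV th := (fun n j => Vabs V (th n j)).

Lemma Mval_fopen (t : Tm0) (g : forall n, nat -> Krel B Tm0 n) (F : formula) :
  Mval cB M (fm_map id g (fopen t F)) =
  Meval cB M (scons t r0) (env2_default (M:=M)) (fm_map id g F).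
Proof.
rewrite /Mval /fopen fm_map_fsubst Meval_fsubst; congr Meval.
by apply: functional_extensionality => -[].
Qed.

Section InductionStep.
Variable N : nat.
Hypothesis IH : forall F th, fsize F < N -> is_formula F -> is_abs_subst th ->
  trile (V (ssubst th F)) (Mval cB M (fm_map id (gV th) F)).

Lemma trile_fopen F th t : fsize F < N -> lcf 1 (fun _ => 0) F -> is_abs_subst th ->
  trile (V (fopen t (ssubst th F)))
        (Meval cB M (scons t r0) (env2_default (M:=M)) (fm_map id (gV th) F)).
Proof.
move=> F_lt F_lc th_abs; rewrite /fopen (fsubst_ssubst _ th_abs F_lc) -Mval_fopen.
apply: IH th_abs; first by rewrite fsize_fsubst.
by apply: lcf_fsubst F_lc; case.
Qed.

Lemma trile_sopen n F th T :
  fsize F < N -> lcf 0 (fun m => if m == n then 1 else 0) F -> is_abs_subst th -> is_abs n T ->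
  trile (V (sopen n 0 T (ssubst th F)))
        (Meval cB M r0 (push (Vabs V (n:=n) T) (env2_default (M:=M))) (fm_map id (gV th) F)).
Proof.
move=> F_lt F_lc th_abs T_abs; have F_j := names_lt_ub F.
rewrite -(ssubst_update_sname n T 0 th_abs F_lc F_j) -(Mval_update_sname cB V n T th F_j).
apply: IH; first by rewrite fsize_sname.
- exact: lcf_sname0 F_lc.
- exact: is_abs_subst_update.
Qed.

End InductionStep.

Lemma canon_model_D1 n :
  forall al, @mD1 _ _ M n al <-> exists2 T, is_abs n T & al = Vabs V T.
Proof. by move=> al; split=> [[T [? ->]]|[T ? ->]]; exists T. Qed.

Lemma V_ssubst_trile_Mval F th : is_formula F -> is_abs_subst th ->
  trile (V (ssubst th F)) (Mval cB M (fm_map id (gV th) F)).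
Proof.
have [N] := ubnP (fsize F); elim: N F th => // N IH F th.
case: V_semi => V_not [V_or [V_and [V_ex1 [V_all1 [V_ex2 V_all2]]]]].
case: F => [n [i|j] ts|F|F0 F1|F0 F1|F|F|n F|n F] F_lt F_ok th_abs; rewrite /Mval.
- by case: F_ok => _ [_].
- case: F_ok => _ [ts_lc _]; rewrite /Vabs /= -!map_comp.
  rewrite (eq_map_all (g:=id) ts_lc) ?map_id; first exact: trile_refl.
  by case.
- apply: trile_trans (V_not _ (lcf_ssubst th_abs F_ok)) _.
  exact/trile_neg/IH.
- case: F_ok => F0_ok F1_ok.
  apply: trile_trans (V_or _ _ (lcf_ssubst (F:=FOr F0 F1) th_abs (conj F0_ok F1_ok))) _.
  by apply/supDB_matched/matched_pair2; apply: IH => //; move: F_lt => /=; lia.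
- case: F_ok => F0_ok F1_ok.
  apply: trile_trans (V_and _ _ (lcf_ssubst (F:=FAnd F0 F1) th_abs (conj F0_ok F1_ok))) _.
  by apply/infDB_matched/matched_pair2; apply: IH => //; move: F_lt => /=; lia.
- apply: trile_trans (V_ex1 _ (lcf_ssubst (F:=FEx1 F) th_abs F_ok)) _.
  by apply/supDB_matched/matched_range => t; apply: (trile_fopen IH).
- apply: trile_trans (V_all1 _ (lcf_ssubst (F:=FAll1 F) th_abs F_ok)) _.
  by apply/infDB_matched/matched_range => t; apply: (trile_fopen IH).
- apply: trile_trans (V_ex2 _ _ (lcf_ssubst (F:=FEx2 n F) th_abs F_ok)) _.
  apply/supDB_matched/(matched_image (canon_model_D1 (n:=n))) => T T_abs.
  by apply: (trile_sopen IH) => //; case: F_ok.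
- apply: trile_trans (V_all2 _ _ (lcf_ssubst (F:=FAll2 n F) th_abs F_ok)) _.
  apply/infDB_matched/(matched_image (canon_model_D1 (n:=n))) => T T_abs.
  by apply: (trile_sopen IH) => //; case: F_ok.
Qed.

(* Part (1) is applied to [G(ts, X)] with the bound [X] named [0] and mapped
   to [T_beta]. *)
Lemma canon_model_3CA : models_3CA cB M.
Proof.
move=> n k G n_gt0 _ G_lc _ [Tb [Tb_abs ->]].
pose G' := formula_of_pure G.
have G'_lc : lcf n (fun m => if m == k then 1 else 0) G' by apply: lcf_fm_map.
pose th := update_abs (fun m _ => dummy_abs m) k 0 Tb.
have th_abs : is_abs_subst th := is_abs_subst_update 0 is_abs_subst_dummy Tb_abs.
have named d1 Y : lcf d1 (fun m => if m == k then 1 else 0) Y -> names_lt 0 Y ->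
    ssubst th (sname k 0 0 Y) = sopen k 0 Tb Y.
  move=> Y_lc Y_0; rewrite (ssubst_update_sname k Tb 0 is_abs_subst_dummy Y_lc Y_0).
  by rewrite ssubst_names_lt0.
pose T := sopen k 0 Tb G'.
have T_abs : is_abs n T.
  split=> //; rewrite /T -(named _ _ G'_lc (names_lt0_pure G)).
  exact: lcf_ssubst th_abs (lcf_sname0 _ G'_lc).
exists (Vabs V T); split; first by exists T.
move=> ts; pose Y := inst G' (map IC ts).
have Y_lc : lcf 0 (fun m => if m == k then 1 else 0) Y.
  by apply: lcf_fsubst G'_lc => i i_lt; rewrite (nth_map 0) ?size_tuple.
have Y_0 : names_lt 0 Y := names_lt_fsubst _ (names_lt0_pure G).
have -> : Vabs V T ts = V (ssubst th (sname k 0 0 Y)).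
  by rewrite /Vabs (named _ _ Y_lc Y_0) /Y /inst /T (sopen_fsubst _ _ _ (proj2 Tb_abs)).
apply: trile_trans (V_ssubst_trile_Mval (lcf_sname0 0 Y_lc) th_abs) _.
rewrite Mval_update_sname // /Y /inst fm_map_fsubst Meval_fsubst.
have -> : fm_map id (gV (fun m _ => dummy_abs m)) G' = embed M G.
  by apply: fm_map_comp => [[]|? []].
suff -> : (fun i : nat => term_val (M:=M) r0 (nth (IB 0) (map IC ts) i)) = nth (md0 M) ts.
  exact: trile_refl.
apply: functional_extensionality => i /=; case: (ltnP i n) => [i_lt|i_ge].
- by rewrite (nth_map (md0 M)) ?size_tuple.
- by rewrite !nth_default ?size_map ?size_tuple.
Qed.

End Soundness.

Theorem mainTheorem5 (disp : Order.disp_t) (B : ctbDistrLatticeType disp)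
  (cB : completeness B) (V : formula -> DB B) (HV : semi_valuation cB V) :
  (forall (F : formula) (th : forall n : nat, nat -> formula),
     is_formula F ->
     (forall n j, (0 < n)%N -> is_abs n (th n j)) ->
     trile (V (ssubst th F))
           (Mval cB (canon_model V) (fm_map id (fun n j => Vabs V (th n j)) F)))
  /\ models_3CA cB (canon_model V).
Proof.
split; last exact: canon_model_3CA.
by move=> F th; apply: V_ssubst_trile_Mval.
Qed.
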